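(* Let $A,B$ be real symmetric $4\times 4$ matrices defining quadrics $\mathcal A: X^TAX=0$, $\mathcal B: X^TBX=0$ in $\mathbb{PR}^3$ with $f(\lambda)=\det(\lambda A-B)$ not identically zero. If $f(\lambda)=0$ has one quadruple root with Segre characteristic $[4]$, then the index sequence is $\langle 2\,{\wr\wr\wr\wr}_{-}\,2\rangle$ or its equivalent form $\langle 2\,{\wr\wr\wr\wr}_{+}\,2\rangle$, and in this case the QSIC comprises a real line and a real space cubic curve tangent to each other at a real point.
   Context: $X=(x,y,z,w)^T$ homogeneous coordinates; QSIC $=\mathcal A\cap\mathcal B$. One may take $A$ nonsingular. Canonical form: for $A$ nonsingular there is a real invertible $Q$ with $Q^TAQ=\mathrm{diag}(\varepsilon_1E_1,\dots)$, $Q^TBQ=\mathrm{diag}(\varepsilon_1E_1J_1,\dots)$, $J_i$ the real Jordan blocks of $A^{-1}B$, $E_i$ anti-identity matrices of matching sizes, and for blocks of real eigenvalues $\varepsilon_i\in\{\pm1\}$ uniquely determined (the sign of $J_i$). Segre characteristic $[4]$: a single eigenvalue with a single $4\times4$ Jordan block. $\mathrm{Id}(\lambda)$ = number of positive eigenvalues of $\lambda A-B$. Index sequence $\langle s_0\sigma_1s_1\rangle$ for one real root: $s_0,s_1$ are the values of $\mathrm{Id}$ before and after the root and $\sigma_1$ is four copies of $\wr$ with subscript the sign of the block. Equivalence of sequences is induced by change of basis of the pencil (including $(A,B)\mapsto(-A,-B)$, which sends $s\mapsto 4-s$ and reverses signs). *)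

From HB Require Import structures.
From mathcomp Require Import all_boot all_order all_algebra.
From mathcomp Require Import reals.
From mathcomp Require Import polyorder polyrcf complex.
Set Implicit Arguments. Unset Strict Implicit. Unset Printing Implicit Defensive.
Import Order.TTheory GRing.Theory Num.Theory.
Local Open Scope ring_scope.

Section Defs.
Variable R : realType.

Definition pencil_poly (A B : 'M[R]_4) : {poly R} :=
  \det ('X *: map_mx polyC A - map_mx polyC B).

Definition pos_eig_count (M : 'M[R]_4) : nat :=
  \sum_(x <- rootsR (char_poly M) | 0 < x) \mu_x (char_poly M).

Definition Id (A B : 'M[R]_4) (l : R) : nat := pos_eig_count (l *: A - B).

Definition anti_id4 : 'M[R]_4 := \matrix_(i, j) ((i + j == 3)%N)%:R.

Definition jordan4 (l : R) : 'M[R]_4 :=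
  \matrix_(i, j) (if i == j then l else if (j == i.+1 :> nat) then 1 else 0).

(* Segre characteristic [4] at eigenvalue l: A^{-1}B is similar to a single
   4x4 Jordan block with eigenvalue l *)
Definition segre4 (A B : 'M[R]_4) (l : R) : Prop :=
  exists P : 'M[R]_4, P \in unitmx /\ invmx P *m (invmx A *m B) *m P = jordan4 l.

Definition toC (x : R) : R[i] := Complex x 0.
Definition mxC m n (M : 'M[R]_(m, n)) : 'M[R[i]]_(m, n) := map_mx toC M.

(* complex points (homogeneous coordinates, row vectors) of the QSIC *)
Definition qsic (A B : 'M[R]_4) (X : 'rV[R[i]]_4) : Prop :=
  X != 0 /\ X *m mxC A *m X^T = 0 /\ X *m mxC B *m X^T = 0.

Definition cubic_pt (K : comNzRingType) (s t : K) : 'rV[K]_4 :=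
  \row_(i < 4) (s ^+ (3 - i) * t ^+ i).
Definition cubic_ds (K : comNzRingType) (s t : K) : 'rV[K]_4 :=
  \row_(i < 4) ((3 - i)%:R * s ^+ (3 - i).-1 * t ^+ i).
Definition cubic_dt (K : comNzRingType) (s t : K) : 'rV[K]_4 :=
  \row_(i < 4) (i%:R * s ^+ (3 - i) * t ^+ i.-1).

Definition on_line (u w : 'rV[R]_4) (X : 'rV[R[i]]_4) : Prop :=
  exists a b : R[i], X = a *: mxC u + b *: mxC w.

Definition on_cubic (M : 'M[R]_4) (X : 'rV[R[i]]_4) : Prop :=
  exists s t : R[i], X = cubic_pt s t *m mxC M.

End Defs.

From HB Require Import structures.
From mathcomp Require Import all_boot all_order all_algebra.
From mathcomp Require Import reals.
From mathcomp Require Import polyorder polyrcf complex.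
From mathcomp Require Import spectral sesquilinear.
From mathcomp Require Import ring lra zify.
Import Order.TTheory GRing.Theory Num.Theory.
Local Open Scope ring_scope.
Set Implicit Arguments.
Unset Strict Implicit.
Unset Printing Implicit Defensive.

(* In a
   Jordan basis P, S := P^T A P and S J = P^T B P are both symmetric, which forces S
   to be a Hankel matrix vanishing above the anti-diagonal; an upper triangular
   Toeplitz change of basis, a polynomial in J and hence commuting with it, then
   normalises S to eps E with eps = -1 or 1.  So (A, B) is congruent to
   eps (E, E J).

   In these coordinates the first two basis vectors span a plane which is totally
   isotropic for every l A - B.  A nonsingular real symmetric 4x4 matrix with a
   totally isotropic plane has two positive and two negative eigenvalues: if all
   eigenvalues but one were positive, some nonzero complex vector of the plane
   would be orthogonal to the exceptional eigenvector, and its hermitian value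
   would be positive.  Hence Id = 2 on both sides of l0.

   The QSIC becomes y0 y3 + y1 y2 = 2 y1 y3 + y2^2 = 0.  Either y2 = y3 = 0, the
   isotropic line, or y = (t^3, -s t^2, 2 s^2 t, 2 s^3), a twisted cubic which
   passes through the line at (s, t) = (0, 1), where its tangent is the line. *)

Lemma char_poly_similar (F : fieldType) n (U D : 'M[F]_n) : U \in unitmx ->
  char_poly (invmx U *m D *m U) = char_poly D.
Proof.
move=> unitU; rewrite /char_poly /char_poly_mx !map_mxM map_invmx.
set Up := map_mx polyC U; have unitUp : Up \in unitmx by rewrite map_unitmx.
transitivity (\det (invmx Up *m ('X%:M - map_mx polyC D) *m Up)).
  congr (\det _); rewrite mulmxBr mulmxBl; congr (_ - _).
  by rewrite -mulmxA -scalar_mxC mulmxA mulVmx ?mul1mx.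
by rewrite !det_mulmx det_inv mulrAC mulVr ?mul1r // -unitfE -unitmxE.
Qed.

Lemma mu_prod_XsubC (F : idomainType) (I : Type) (s : seq I) (f : I -> F) x :
  \mu_x (\prod_(i <- s) ('X - (f i)%:P)) = (\sum_(i <- s) (f i == x))%N.
Proof.
elim: s => [|a s IHs]; first by rewrite !big_nil mu_polyC.
rewrite !big_cons mu_mul ?IHs; last first.
  by rewrite mulf_neq0 ?polyXsubC_eq0 ?monic_neq0 ?monic_prod_XsubC.
have [<-|neq_ax] := eqVneq (f a) x; first by rewrite mu_XsubC.
by rewrite muNroot // root_XsubC eq_sym.
Qed.

Lemma row_free_pid_mul (F : fieldType) r n (P : 'M[F]_n) :
  (r <= n)%N -> P \in unitmx -> row_free (pid_mx r *m P : 'M_(r, n)).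
Proof. by move=> le_rn unitP; rewrite /row_free mxrankMfree ?row_free_unit // rank_pid_mx. Qed.

Lemma eqmx_col_swap (F : fieldType) m1 m2 n (a : F) (A : 'M_(m1, n)) (B : 'M_(m2, n)) :
  a != 0 -> (col_mx A B :=: col_mx (- B) (a *: A))%MS.
Proof.
move=> a_neq0; apply: eqmx_trans (eqmx_sym (addsmxE _ _)) (eqmx_trans _ (addsmxE _ _)).
by rewrite addsmxC; apply: adds_eqmx; apply: eqmx_sym; [apply: eqmx_opp | apply: eqmx_scale].
Qed.

Lemma scalar_mx1_eq0 (K : pzRingType) (x : K) : x%:M = 0 :> 'M_1 <-> x = 0.
Proof.
split=> [/matrixP/(_ 0 0)|->]; first by rewrite !mxE mulr1n.
by apply/matrixP => i j; rewrite !mxE mul0rn.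
Qed.

Lemma canonical_base_locus (K : numClosedFieldType) (y0 y1 y2 y3 : K) :
  y0 * y3 + y1 * y2 = 0 /\ 2 * y1 * y3 + y2 ^+ 2 = 0 <->
  y2 = 0 /\ y3 = 0 \/
  exists s t, [/\ y0 = t ^+ 3, y1 = - (s * t ^+ 2), y2 = 2 * s ^+ 2 * t & y3 = 2 * s ^+ 3].
Proof.
split=> [[eqA eqB]|[[-> ->]|[s [t [-> -> -> ->]]]]]; [|by split; ring..].
have two_neq0 : 2 != 0 :> K by rewrite pnatr_eq0.
have [y3_0|y3_neq0] := eqVneq y3 0.
  left; split=> //; apply/eqP; rewrite -sqrf_eq0; apply/eqP.
  by rewrite -eqB y3_0; ring.
right; pose s := 3.-root (y3 / 2); exists s, (y2 / (2 * s ^+ 2)).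
have s3 : s ^+ 3 = y3 / 2 by rewrite rootCK.
have s_neq0 : s != 0.
  by apply: contraNneq y3_neq0 => s0; rewrite -[y3](divfK two_neq0) -s3 s0 expr0n mul0r.
have y3E : y3 = 2 * s ^+ 3 by rewrite s3 mulrC divfK.
have y1E : y1 = - y2 ^+ 2 / (2 * y3).
  apply: (mulIf (mulf_neq0 two_neq0 y3_neq0)); rewrite mulfVK ?mulf_neq0 //.
  by apply/eqP; rewrite -subr_eq0 -eqB; apply/eqP; ring.
have y0E : y0 = - y1 * y2 / y3.
  apply: (mulIf y3_neq0); rewrite mulfVK //.
  by apply/eqP; rewrite -subr_eq0 -eqA; apply/eqP; ring.
by split; rewrite ?y0E ?y1E ?y3E; field.
Qed.

(** * Complexification and inertia *)

Section Complexification.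
Variable R : realType.
Local Open Scope sesquilinear_scope.

Lemma mxCM m n p (M : 'M[R]_(m, n)) (N : 'M[R]_(n, p)) :
  mxC (M *m N) = mxC M *m mxC N.
Proof. exact: (map_mxM (real_complex R)). Qed.

Lemma mxC0 m n : mxC (0 : 'M[R]_(m, n)) = 0.
Proof. exact: (map_mx0 (real_complex R)). Qed.

Lemma mxCN m n (M : 'M[R]_(m, n)) : mxC (- M) = - mxC M.
Proof. exact: (map_mxN (real_complex R)). Qed.

Lemma mxCZ m n a (M : 'M[R]_(m, n)) : mxC (a *: M) = toC a *: mxC M.
Proof. exact: (map_mxZ (real_complex R)). Qed.

Lemma mxC_unit n (M : 'M[R]_n) : (mxC M \in unitmx) = (M \in unitmx).
Proof. exact: (map_unitmx (real_complex R)). Qed.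

Lemma row_free_mxC m n (M : 'M[R]_(m, n)) : row_free (mxC M) = row_free M.
Proof. by rewrite /row_free (mxrank_map (real_complex R)). Qed.

Lemma mxC_tr m n (M : 'M[R]_(m, n)) : (mxC M)^T = mxC M^T.
Proof. exact: map_trmx. Qed.

Lemma mxC_trC m n (M : 'M[R]_(m, n)) : (mxC M)^t* = mxC M^T.
Proof. by apply/matrixP => i j; rewrite !mxE /toC /=; simpc. Qed.

Lemma toC0 : toC (0 : R) = 0. Proof. by []. Qed.

Lemma toC1 : toC (1 : R) = 1. Proof. by []. Qed.

Lemma toCE (x : R) : toC x = real_complex R x. Proof. by []. Qed.

End Complexification.

Section Inertia.
Variable R : realType.
Local Notation C := R[i].
Local Open Scope sesquilinear_scope.

Lemma symmetric_spectral n (M : 'M[R]_n) : M^T = M ->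
  exists2 U : 'M[C]_n, U \is unitarymx &
    exists r : 'rV[R]_n, mxC M = invmx U *m diag_mx (mxC r) *m U.
Proof.
move=> symM; have hermM : mxC M \is hermsymmx.
  by apply/is_hermitianmxP; rewrite expr0 scale1r mxC_trC symM.
exists (spectralmx (mxC M)); first exact: spectral_unitarymx.
have /mxOverP real_d := hermitian_spectral_diag_real hermM.
exists (map_mx (@complex.Re R) (spectral_diag (mxC M))).
have -> : mxC (map_mx (@complex.Re R) (spectral_diag (mxC M))) = spectral_diag (mxC M).
  apply/rowP => i; rewrite !mxE.
  have := real_d 0 i; rewrite CrealE; case: (spectral_diag _ 0 i) => a b /=.
  by move=> /eqP [b0]; rewrite /toC; congr Complex; lra.
exact/orthomx_spectralP/hermitian_normalmx.
Qed.

Lemma char_poly_spectral n (M : 'M[R]_n) (U : 'M[C]_n) (r : 'rV[R]_n) :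
  U \in unitmx -> mxC M = invmx U *m diag_mx (mxC r) *m U ->
  char_poly M = \prod_i ('X - (r 0 i)%:P).
Proof.
move=> unitU defM; apply: (map_poly_inj (real_complex R)).
rewrite map_char_poly [map_mx _ M]defM char_poly_similar //.
rewrite char_poly_trig ?diag_mx_is_trig // rmorph_prod; apply: eq_bigr => i _.
by rewrite !mxE eqxx mulr1n rmorphB /= map_polyX map_polyC.
Qed.

Lemma pos_eig_count_prod (M : 'M[R]_4) (r : 'rV[R]_4) :
  char_poly M = \prod_i ('X - (r 0 i)%:P) ->
  pos_eig_count M = #|[set i | 0 < r 0 i]|.
Proof.
move=> charM; rewrite /pos_eig_count charM.
under eq_bigr do rewrite mu_prod_XsubC.
rewrite exchange_big -sum1_card [RHS]big_mkcond /=; apply: eq_bigr => i _.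
have p_neq0 : \prod_i ('X - (r 0 i)%:P) != 0 by rewrite monic_neq0 ?monic_prod_XsubC.
have r_root : r 0 i \in rootsR (\prod_i ('X - (r 0 i)%:P)).
  rewrite -(roots_on_rootsR p_neq0) // rootE horner_prod (bigD1 i) //=.
  by rewrite hornerXsubC subrr mul0r.
rewrite (big_rem _ r_root) /= eqxx big1_seq ?addn0; first by rewrite inE; case: ifP.
move=> x /andP[_ x_in]; apply/eqP; rewrite eqb0; apply: contraTN x_in => /eqP <-.
by rewrite mem_rem_uniqF ?uniq_roots.
Qed.

Lemma spectral_form n (M : 'M[R]_n) (U : 'M[C]_n) (r : 'rV[R]_n) (x : 'rV[C]_n) :
  U \is unitarymx -> mxC M = invmx U *m diag_mx (mxC r) *m U ->
  (x *m mxC M *m x^t* ) 0 0 =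
    \sum_i toC (r 0 i) * ((x *m U^t* ) 0 i * ((x *m U^t* ) 0 i)^*).
Proof.
move=> unitaryU defM; rewrite defM invmx_unitary // -!mulmxA.
have -> : U *m x^t* = (x *m U^t* )^t* by rewrite trmx_mul map_mxM trmxCK.
rewrite !mulmxA mul_mx_diag mxE; apply: eq_bigr => i _.
by rewrite !mxE mulrAC mulrC.
Qed.

Lemma isotropic_plane_nonpos_eig n (M : 'M[R]_n) (U : 'M[C]_n) (r : 'rV[R]_n)
    (W : 'M[R]_(2, n)) :
  U \is unitarymx -> mxC M = invmx U *m diag_mx (mxC r) *m U ->
  row_free W -> W *m M *m W^T = 0 -> (1 < #|[set i | (r 0 i <= 0)%R]|)%N.
Proof.
move=> unitaryU defM freeW isoW; rewrite ltnNge; apply/negP => S_le1.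
(* Some x <> 0 in the plane has coordinates y := x U^* vanishing on S; then the
   form at x, a sum of r_i |y_i|^2 with r_i > 0 off S, is 0, so y = 0. *)
set S := [set i | r 0 i <= 0] in S_le1.
pose G := mxC W *m U^t*.
have [c c_neq0 cG_S] : exists2 c : 'rV[C]_2, c != 0 & c *m colsub (@enum_val _ S) G = 0.
  exists (nz_row (kermx (colsub (@enum_val _ S) G))); last exact/sub_kermxP/nz_row_sub.
  rewrite nz_row_eq0 kermx_eq0 /row_free neq_ltn.
  by rewrite (leq_ltn_trans (rank_leq_col _)).
pose x := c *m mxC W.
have x_neq0 : x != 0 by rewrite mulmx_free_eq0 // row_free_mxC.
have y_S i : i \in S -> (x *m U^t* ) 0 i = 0.
  move=> iS; have /rowP/(_ (enum_rank_in iS i)) := cG_S.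
  by rewrite mulmx_colsub mxE enum_rankK_in // /x -mulmxA => ->; rewrite mxE.
have : (x *m mxC M *m x^t* ) 0 0 = 0.
  have -> : x *m mxC M *m x^t* = c *m mxC (W *m M *m W^T) *m c^t*.
    by rewrite /x trmx_mul map_mxM mxC_trC !mxCM !mulmxA.
  by rewrite isoW mxC0 mulmx0 mul0mx mxE.
rewrite (spectral_form _ unitaryU defM); set y := x *m U^t* => form0.
have r_pos j : j \notin S -> 0 < toC (r 0 j) by rewrite ltcR inE ltNge.
have term_ge0 j : true -> 0 <= toC (r 0 j) * (y 0 j * (y 0 j)^* ).
  move=> _; have [/y_S->|/r_pos/ltW r_ge0] := boolP (j \in S); first by rewrite !mul0r mulr0.
  by rewrite mulr_ge0 ?mul_conjC_ge0.
suff y0 : y = 0 by move: x_neq0; rewrite -(mulmxKtV x unitaryU) // -/y y0 mul0mx eqxx.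
apply/rowP => j; rewrite [RHS]mxE; have [/y_S//|jNS] := boolP (j \in S).
have := psumr_eq0P term_ge0 form0 (i := j) isT.
by move/eqP; rewrite mulf_eq0 gt_eqF ?r_pos //= mul_conjC_eq0 => /eqP.
Qed.

Lemma pos_eig_count_isotropic (M : 'M[R]_4) (W : 'M[R]_(2, 4)) :
  M^T = M -> \det M != 0 -> row_free W -> W *m M *m W^T = 0 ->
  pos_eig_count M = 2%N.
Proof.
move=> symM detM freeW isoW.
have [U unitaryU [r defM]] := symmetric_spectral symM.
have charM := char_poly_spectral (unitarymx_unit unitaryU) defM.
have r_neq0 i : r 0 i != 0.
  apply: contraNneq detM => ri0; have : (char_poly M).[0] = 0.
    by rewrite charM horner_prod (bigD1 i) //= ri0 hornerXsubC subrr mul0r.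
  by rewrite horner_coef0 char_poly_det => /eqP; rewrite mulf_eq0 signr_eq0.
have defNM : mxC (- M) = invmx U *m diag_mx (mxC (- r)) *m U.
  by rewrite !mxCN defM raddfN /= mulmxN mulNmx.
have isoNW : W *m - M *m W^T = 0 by rewrite mulmxN mulNmx isoW oppr0.
have nonpos_ge2 := isotropic_plane_nonpos_eig unitaryU defM freeW isoW.
have pos_ge2 := isotropic_plane_nonpos_eig unitaryU defNM freeW isoNW.
rewrite (pos_eig_count_prod charM).
have pos_NM : [set i | (- r) 0 i <= 0] = [set i | 0 < r 0 i].
  by apply/setP => i; rewrite !inE mxE oppr_le0 le_eqVlt eq_sym (negbTE (r_neq0 i)).
have pos_M : [set i | r 0 i <= 0] = ~: [set i | 0 < r 0 i].
  by apply/setP => i; rewrite !inE leNgt.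
have := cardsC [set i | 0 < r 0 i]; rewrite card_ord -pos_M.
rewrite pos_NM in pos_ge2; lia.
Qed.

End Inertia.

(** * Canonical form of the pencil *)

Local Notation o0 := (@Ordinal 4 0 isT).
Local Notation o1 := (@Ordinal 4 1 isT).
Local Notation o2 := (@Ordinal 4 2 isT).
Local Notation o3 := (@Ordinal 4 3 isT).

Lemma ord4_ind (P : 'I_4 -> Prop) : P o0 -> P o1 -> P o2 -> P o3 -> forall i, P i.
Proof.
move=> P0 P1 P2 P3 [[|[|[|[|k]]]] lt_k4] //.
- by rewrite (_ : Ordinal lt_k4 = o0) //; apply: val_inj.
- by rewrite (_ : Ordinal lt_k4 = o1) //; apply: val_inj.
- by rewrite (_ : Ordinal lt_k4 = o2) //; apply: val_inj.
- by rewrite (_ : Ordinal lt_k4 = o3) //; apply: val_inj.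
Qed.

Lemma big_ord4 (V : nmodType) (F : 'I_4 -> V) :
  \sum_(i < 4) F i = F o0 + F o1 + F o2 + F o3.
Proof.
by rewrite !big_ord_recr big_ord0 /= add0r; congr (F _ + F _ + F _ + F _); apply: val_inj.
Qed.

Ltac mx4_entries :=
  apply/matrixP; apply: ord4_ind; apply: ord4_ind;
  rewrite !mxE ?big_ord4 !mxE ?big_ord4 ?mxE /=.

Section CanonicalForm.
Variable R : realType.

Lemma anti_id4_invol : anti_id4 R *m anti_id4 R = 1%:M.
Proof. by mx4_entries; ring. Qed.

Lemma anti_id4_unit : anti_id4 R \in unitmx.
Proof. by case: (mulmx1_unit anti_id4_invol). Qed.

(* hankel4 has (i, j) entry h_(i+j), where h_k = 0 for k < 3; toeplitz4 t0 t1 t2 t3 is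
   t0 + t1 N + t2 N^2 + t3 N^3 for the nilpotent part N of a 4x4 Jordan block. *)
Definition hankel4 (h3 h4 h5 h6 : R) : 'M[R]_4 :=
  \matrix_(i, j) nth 0 [:: 0; 0; 0; h3; h4; h5; h6] (i + j).

Definition toeplitz4 (t0 t1 t2 t3 : R) : 'M[R]_4 :=
  \matrix_(i, j) if (i <= j)%N then nth 0 [:: t0; t1; t2; t3] (j - i) else 0.

Lemma toeplitz4_jordan4_comm t0 t1 t2 t3 l :
  toeplitz4 t0 t1 t2 t3 *m jordan4 l = jordan4 l *m toeplitz4 t0 t1 t2 t3.
Proof. by mx4_entries; ring. Qed.

Lemma sym_jordan4_hankel (S : 'M[R]_4) l :
  S^T = S -> (S *m jordan4 l)^T = S *m jordan4 l ->
  S = hankel4 (S o0 o3) (S o1 o3) (S o2 o3) (S o3 o3).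
Proof.
move=> /matrixP symS /matrixP symSJ.
have S_sym i j : S j i = S i j by have := symS i j; rewrite mxE.
have SJ_sym i j : (S *m jordan4 l) j i = (S *m jordan4 l) i j.
  by have := symSJ i j; rewrite mxE.
have := SJ_sym o0 o1; have := SJ_sym o0 o2; have := SJ_sym o0 o3.
have := SJ_sym o1 o2; have := SJ_sym o1 o3; have := SJ_sym o2 o3.
rewrite !mxE !big_ord4 !mxE /= ?(S_sym o0 o1) ?(S_sym o0 o2) ?(S_sym o0 o3).
rewrite ?(S_sym o1 o2) ?(S_sym o1 o3) ?(S_sym o2 o3) => e23 e13 e12 e03 e02 e01.
apply/matrixP; apply: ord4_ind; apply: ord4_ind; rewrite !mxE /=;
  rewrite ?(S_sym o0 o1) ?(S_sym o0 o2) ?(S_sym o0 o3);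
  rewrite ?(S_sym o1 o2) ?(S_sym o1 o3) ?(S_sym o2 o3);
  lra.
Qed.

Lemma hankel4_toeplitz4_congr h3 h4 h5 h6 t0 : h3 != 0 -> t0 != 0 ->
  exists t1 t2 t3, let T := toeplitz4 t0 t1 t2 t3 in
    T^T *m hankel4 h3 h4 h5 h6 *m T = (h3 * t0 ^+ 2) *: anti_id4 R.
Proof.
move=> h3_neq0 t0_neq0; have two_neq0 : 2 != 0 :> R by rewrite pnatr_eq0.
(* Entries (0, 1), (0, 2), (0, 3) of the congruence: a triangular system in t1, t2, t3. *)
pose t1 := - h4 * t0 / (2 * h3).
pose t2 := - (h5 * t0 ^+ 2 + 2 * h4 * t0 * t1 + h3 * t1 ^+ 2) / (2 * h3 * t0).
pose t3 := - (h6 * t0 ^+ 2 + 2 * h5 * t0 * t1 + h4 * (t1 ^+ 2 + 2 * t0 * t2)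
              + 2 * h3 * t1 * t2) / (2 * h3 * t0).
exists t1, t2, t3; mx4_entries; rewrite /t3 /t2 /t1; field;
  by rewrite ?two_neq0 ?h3_neq0 ?t0_neq0.
Qed.

Lemma sign_sqr_scale (h : R) : h != 0 ->
  exists2 t : R, t != 0 & h * t ^+ 2 = -1 \/ h * t ^+ 2 = 1.
Proof.
move=> h_neq0; have normh_gt0 : 0 < `|h| by rewrite normr_gt0.
exists (Num.sqrt `|h|)^-1; first by rewrite invr_eq0 sqrtr_eq0 -ltNge.
rewrite exprVn sqr_sqrtr ?ltW //.
case: ltrgt0P h_neq0 => [h_gt0 _|h_lt0 _|] //.
  by right; rewrite mulfV ?gt_eqF.
by left; rewrite invrN mulrN mulfV ?lt_eqF.
Qed.

Lemma segre4_canonical_form (A B : 'M[R]_4) l0 :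
  A^T = A -> B^T = B -> A \in unitmx -> segre4 A B l0 ->
  exists eps : R, (eps = -1 \/ eps = 1) /\
    exists Q : 'M[R]_4, Q \in unitmx /\
      Q^T *m A *m Q = eps *: anti_id4 R /\
      Q^T *m B *m Q = eps *: (anti_id4 R *m jordan4 l0).
Proof.
move=> symA symB unitA [P [unitP PJ]]; set S := P^T *m A *m P.
have SJ : P^T *m B *m P = S *m jordan4 l0 by rewrite -PJ !mulmxA mulmxK // mulmxK.
have symS : S^T = S by rewrite !trmx_mul trmxK symA mulmxA.
have symSJ : (S *m jordan4 l0)^T = S *m jordan4 l0.
  by rewrite -SJ !trmx_mul trmxK symB mulmxA.
have unitS : S \in unitmx by rewrite !unitmx_mul unitmx_tr unitP unitA.
have defS := sym_jordan4_hankel symS symSJ.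
have h3_neq0 : S o0 o3 != 0.
  (* otherwise the first row of S vanishes *)
  apply: contraTneq unitS => h3_0; rewrite -row_free_unit.
  have : delta_mx 0 o0 *m S = 0 :> 'rV_4.
    by rewrite defS h3_0; apply/rowP; apply: ord4_ind; rewrite !mxE big_ord4 !mxE /=; ring.
  move=> /eqP e0S; apply/negP => freeS; move: e0S.
  by rewrite mulmx_free_eq0 // => /eqP/rowP/(_ o0); rewrite !mxE /= => /eqP; rewrite oner_eq0.
have [t0 t0_neq0 eps_pm1] := sign_sqr_scale h3_neq0.
have [t1 [t2 [t3]]] := hankel4_toeplitz4_congr (S o1 o3) (S o2 o3) (S o3 o3) h3_neq0 t0_neq0.
rewrite -defS => congrT; set T := toeplitz4 t0 t1 t2 t3 in congrT.
set eps := S o0 o3 * t0 ^+ 2 in congrT eps_pm1.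
have unitT : T \in unitmx.
  have : T^T *m S *m T \in unitmx.
    rewrite congrT unitmxZ ?anti_id4_unit // unitfE.
    by case: eps_pm1 => ->; rewrite ?oppr_eq0 oner_eq0.
  by rewrite !unitmx_mul => /andP[].
exists eps; split=> //; exists (P *m T); split; first by rewrite unitmx_mul unitP.
split; first by rewrite -congrT trmx_mul /S !mulmxA.
have -> : (P *m T)^T *m B *m (P *m T) = T^T *m (P^T *m B *m P) *m T.
  by rewrite trmx_mul !mulmxA.
rewrite SJ !mulmxA -(mulmxA _ (jordan4 l0)) -toeplitz4_jordan4_comm -/T.
by rewrite scalemxAl -congrT /S !mulmxA.
Qed.

End CanonicalForm.

(** * The intersection curve *)

Section Intersection.
Variable R : realType.
Local Notation C := R[i].

Lemma col_mx_delta01 :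
  col_mx (delta_mx 0 o0 : 'rV[R]_4) (delta_mx 0 o1) = pid_mx 2 :> 'M_(2, 4).
Proof.
apply/matrixP => i j; rewrite !mxE; case: splitP => k; rewrite ord1 => ->; rewrite !mxE /=;
  by case: j => [[|[|[|[|?]]]] ?].
Qed.

Lemma pid_mx2_isotropic a b l :
  pid_mx 2 *m (a *: anti_id4 R - b *: (anti_id4 R *m jordan4 l)) *m (pid_mx 2)^T = 0
    :> 'M[R]_2.
Proof.
apply/matrixP => -[[|[|//]] ?] [[|[|//]] ?].
all: rewrite mxE big_ord4 !mxE /= !(mulr0, mulr1, addr0, add0r);
by rewrite big_ord4 !mxE /= !(mul0r, mul1r, addr0, add0r) !big_ord4 !mxE /=; ring.
Qed.

Definition row4 (a b c d : C) : 'rV[C]_4 := \row_(i < 4) [:: a; b; c; d]`_i.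

Lemma row4P (Y : 'rV[C]_4) a b c d :
  Y = row4 a b c d <-> [/\ Y 0 o0 = a, Y 0 o1 = b, Y 0 o2 = c & Y 0 o3 = d].
Proof.
split=> [->|[<- <- <- <-]]; first by rewrite !mxE.
by apply/rowP; apply: ord4_ind; rewrite mxE.
Qed.

Lemma anti_id4_form a b c d :
  row4 a b c d *m mxC (anti_id4 R) *m (row4 a b c d)^T = (2 * (a * d + b * c))%:M.
Proof.
by apply/rowP => i; rewrite ord1 !(mxE, big_ord4) /= ?toC0 ?toC1; ring.
Qed.

Lemma jordan4_form l a b c d :
  row4 a b c d *m mxC (anti_id4 R *m jordan4 l) *m (row4 a b c d)^T =
  (toC l * (2 * (a * d + b * c)) + (2 * b * d + c ^+ 2))%:M.
Proof.
by apply/rowP => i; rewrite ord1 mxCM !(mxE, big_ord4) /= ?toC0 ?toC1; ring.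
Qed.

Definition cubic_frame : 'M[R]_4 := anti_id4 R *m diag_mx (\row_j [:: 1; -1; 2; 2]`_j).

Lemma cubic_frame_unit : cubic_frame \in unitmx.
Proof.
rewrite unitmx_mul anti_id4_unit unitmxE det_diag unitfE !big_ord_recr big_ord0 /= !mxE /=.
by rewrite !mul1r mulN1r mulNr oppr_eq0 -natrM pnatr_eq0.
Qed.

Lemma cubic_frame_pt (s t : C) :
  cubic_pt s t *m mxC cubic_frame =
    row4 (t ^+ 3) (- (s * t ^+ 2)) (2 * s ^+ 2 * t) (2 * s ^+ 3).
Proof.
apply/rowP; apply: ord4_ind; rewrite !(mxE, big_ord4) /= !toCE;
by rewrite !(rmorphD, rmorphM, rmorphN, rmorph0, rmorph1, rmorphMn); ring.
Qed.

Lemma on_line_canonical (Y : 'rV[C]_4) :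
  on_line (delta_mx 0 o0) (delta_mx 0 o1) Y <-> Y 0 o2 = 0 /\ Y 0 o3 = 0.
Proof.
have lineE a b : a *: mxC (delta_mx 0 o0) + b *: mxC (delta_mx 0 o1) = row4 a b 0 0.
  by apply/rowP; apply: ord4_ind; rewrite !mxE /= ?toC0 ?toC1 ?mulr1 ?mulr0 ?addr0 ?add0r.
split=> [[a [b]]|[y2_0 y3_0]]; first by rewrite lineE => /row4P[].
by exists (Y 0 o0), (Y 0 o1); rewrite lineE; apply/row4P.
Qed.

Lemma on_cubic_canonical (Y : 'rV[C]_4) :
  on_cubic cubic_frame Y <-> exists s t,
    [/\ Y 0 o0 = t ^+ 3, Y 0 o1 = - (s * t ^+ 2),
         Y 0 o2 = 2 * s ^+ 2 * t & Y 0 o3 = 2 * s ^+ 3].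
Proof.
split=> -[s [t eqY]]; exists s, t; last by rewrite cubic_frame_pt; apply/row4P.
by apply/row4P; rewrite -cubic_frame_pt.
Qed.

Lemma qsic_canonical l (Y : 'rV[C]_4) :
  qsic (anti_id4 R) (anti_id4 R *m jordan4 l) Y <->
  Y != 0 /\ (on_line (delta_mx 0 o0) (delta_mx 0 o1) Y \/ on_cubic cubic_frame Y).
Proof.
rewrite on_line_canonical on_cubic_canonical -canonical_base_locus /qsic.
set y0 := Y 0 o0; set y1 := Y 0 o1; set y2 := Y 0 o2; set y3 := Y 0 o3.
have defY : Y = row4 y0 y1 y2 y3 by apply/row4P.
rewrite [in X in X = 0 /\ _]defY [in X in _ /\ X = 0]defY.
rewrite anti_id4_form jordan4_form !scalar_mx1_eq0.
have two_neq0 : 2 != 0 :> C by rewrite pnatr_eq0.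
split=> -[Y_neq0 [eqA eqB]]; split=> //; last by rewrite eqA eqB !mulr0 add0r.
have {}eqA : y0 * y3 + y1 * y2 = 0.
  by move/eqP: eqA; rewrite mulf_eq0 (negbTE two_neq0) => /eqP.
by rewrite eqA !mulr0 add0r in eqB.
Qed.

Lemma qsic_congr (A B A' B' Q : 'M[R]_4) (eps : R) (Y : 'rV[C]_4) :
  Q \in unitmx -> eps != 0 ->
  Q^T *m A *m Q = eps *: A' -> Q^T *m B *m Q = eps *: B' ->
  qsic A B (Y *m mxC Q^T) <-> qsic A' B' Y.
Proof.
move=> unitQ eps_neq0 congrA congrB.
have form_congr M M' : Q^T *m M *m Q = eps *: M' ->
    Y *m mxC Q^T *m mxC M *m (Y *m mxC Q^T)^T = toC eps *: (Y *m mxC M' *m Y^T).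
  move=> congrM; rewrite trmx_mul mxC_tr trmxK !mulmxA -(mulmxA Y) -(mulmxA Y).
  by rewrite -!mxCM congrM mxCZ -scalemxAr -scalemxAl.
have scale_eq0 (Z : 'M[C]_1) : toC eps *: Z = 0 <-> Z = 0.
  split=> [/eqP|->]; last exact: scaler0.
  by rewrite scaler_eq0 => /orP[/eqP[/eqP]|/eqP]; rewrite ?(negbTE eps_neq0).
rewrite /qsic (form_congr A A') // (form_congr B B') // !scale_eq0.
by rewrite mulmx_free_eq0 // row_free_unit mxC_unit unitmx_tr.
Qed.

Lemma on_line_mulmx (P : 'M[R]_4) (u w : 'rV[R]_4) (Y : 'rV[C]_4) : P \in unitmx ->
  on_line (u *m P) (w *m P) (Y *m mxC P) <-> on_line u w Y.
Proof.
rewrite -mxC_unit => /mulmxK /can_inj injP.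
have lineP a b : a *: mxC (u *m P) + b *: mxC (w *m P) = (a *: mxC u + b *: mxC w) *m mxC P.
  by rewrite !mxCM !scalemxAl mulmxDl.
by split=> -[a [b eqY]]; exists a, b; [apply: injP; rewrite -lineP | rewrite lineP eqY].
Qed.

Lemma on_cubic_mulmx (P M : 'M[R]_4) (Y : 'rV[C]_4) : P \in unitmx ->
  on_cubic (M *m P) (Y *m mxC P) <-> on_cubic M Y.
Proof.
rewrite -mxC_unit => /mulmxK /can_inj injP.
split=> -[s [t eqY]]; exists s, t; last by rewrite mxCM mulmxA eqY.
by apply: injP; rewrite -mulmxA -mxCM.
Qed.

Lemma cubic_frame_tangent :
  (col_mx (delta_mx 0 o0 : 'rV[R]_4) (delta_mx 0 o1 : 'rV[R]_4) ==
   col_mx (cubic_ds 0 1 *m cubic_frame) (cubic_dt 0 1 *m cubic_frame))%MS.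
Proof.
have -> : cubic_ds 0 1 *m cubic_frame = - delta_mx 0 o1.
  by apply/rowP; apply: ord4_ind; rewrite !(mxE, big_ord4) /= ?subSS ?subn0 /=; ring.
have -> : cubic_dt 0 1 *m cubic_frame = 3 *: delta_mx 0 o0.
  by apply/rowP; apply: ord4_ind; rewrite !(mxE, big_ord4) /= ?subSS ?subn0 /=; ring.
by apply/eqmxP/eqmx_col_swap; rewrite pnatr_eq0.
Qed.

Lemma canonical_pencil_qsic (A B Q : 'M[R]_4) (eps l0 : R) : Q \in unitmx -> eps != 0 ->
  Q^T *m A *m Q = eps *: anti_id4 R ->
  Q^T *m B *m Q = eps *: (anti_id4 R *m jordan4 l0) ->
  exists (u w : 'rV[R]_4) (M : 'M[R]_4) (s0 t0 : R),
     row_free (col_mx u w) /\ M \in unitmx /\ (s0, t0) != (0, 0) /\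
     (forall X : 'rV[R[i]]_4,
        qsic A B X <-> X != 0 /\ (on_line u w X \/ on_cubic M X)) /\
     (col_mx u w == col_mx (cubic_ds s0 t0 *m M) (cubic_dt s0 t0 *m M))%MS.
Proof.
move=> unitQ eps_neq0 congrA congrB; have unitQT : Q^T \in unitmx by rewrite unitmx_tr.
exists (delta_mx 0 o0 *m Q^T), (delta_mx 0 o1 *m Q^T), (cubic_frame *m Q^T), 0, 1.
have -> : col_mx (delta_mx 0 o0 *m Q^T) (delta_mx 0 o1 *m Q^T) = pid_mx 2 *m Q^T
    :> 'M_(1 + 1, 4).
  by rewrite -mul_col_mx col_mx_delta01.
split; first by rewrite row_free_pid_mul.
split; first by rewrite unitmx_mul cubic_frame_unit.
split; first by rewrite xpair_eqE oner_eq0 andbF.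
split; last first.
  rewrite -mul_col_mx mulmxA mul_col_mx -col_mx_delta01.
  by apply/eqmxP/eqmxMr/eqmxP; apply: cubic_frame_tangent.
move=> X; have unitQTC : mxC Q^T \in unitmx by rewrite mxC_unit.
rewrite -(mulmxKV unitQTC X); move: (X *m _) => Y.
rewrite (qsic_congr _ unitQ eps_neq0 congrA congrB) qsic_canonical.
by rewrite on_line_mulmx // on_cubic_mulmx // mulmx_free_eq0 ?row_free_unit.
Qed.

Lemma canonical_pencil_Id (A B Q : 'M[R]_4) (eps l0 l : R) : A^T = A -> B^T = B ->
  Q \in unitmx -> Q^T *m A *m Q = eps *: anti_id4 R ->
  Q^T *m B *m Q = eps *: (anti_id4 R *m jordan4 l0) ->
  \det (l *: A - B) != 0 -> Id A B l = 2%N.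
Proof.
move=> symA symB unitQ congrA congrB det_neq0.
apply: (@pos_eig_count_isotropic _ _ (pid_mx 2 *m Q^T)) => //.
- by rewrite linearB /= linearZ /= symA symB.
- by rewrite row_free_pid_mul ?unitmx_tr.
have -> : pid_mx 2 *m Q^T *m (l *: A - B) *m (pid_mx 2 *m Q^T)^T =
          pid_mx 2 *m (Q^T *m (l *: A - B) *m Q) *m (pid_mx 2)^T :> 'M_2.
  by rewrite trmx_mul trmxK !mulmxA.
by rewrite mulmxBr mulmxBl -scalemxAr -scalemxAl congrA congrB scalerA pid_mx2_isotropic.
Qed.

Lemma pencil_poly_horner (A B : 'M[R]_4) l : (pencil_poly A B).[l] = \det (l *: A - B).
Proof.
rewrite /pencil_poly -horner_evalE -det_map_mx; congr (\det _).
by apply/matrixP => i j; rewrite !mxE rmorphB rmorphM /= !horner_evalE hornerX !hornerC.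
Qed.

End Intersection.

Theorem theorem12 (R : realType) (A B : 'M[R]_4) (l0 : R) :
  A^T = A -> B^T = B ->
  pencil_poly A B != 0 ->
  pencil_poly A B = \det A *: ('X - l0%:P) ^+ 4 ->
  segre4 A B l0 ->
  (* index sequence < 2 wr wr wr wr_eps 2 >, eps = - or + *)
  ((forall l, l < l0 -> Id A B l = 2%N) /\
   (forall l, l0 < l -> Id A B l = 2%N) /\
   exists eps : R, (eps = -1 \/ eps = 1) /\
     exists Q : 'M[R]_4, Q \in unitmx /\
       Q^T *m A *m Q = eps *: anti_id4 R /\
       Q^T *m B *m Q = eps *: (anti_id4 R *m jordan4 l0)) /\
  (* QSIC = real line  U  real space cubic, tangent at a real point *)
  (exists (u w : 'rV[R]_4) (M : 'M[R]_4) (s0 t0 : R),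
     row_free (col_mx u w) /\ M \in unitmx /\ (s0, t0) != (0, 0) /\
     (forall X : 'rV[R[i]]_4,
        qsic A B X <-> X != 0 /\ (on_line u w X \/ on_cubic M X)) /\
     (col_mx u w == col_mx (cubic_ds s0 t0 *m M) (cubic_dt s0 t0 *m M))%MS).
Proof.
move=> symA symB pencil_neq0 pencilE segreAB.
have detA_neq0 : \det A != 0.
  by apply: contraNneq pencil_neq0 => detA0; rewrite pencilE detA0 scale0r.
have unitA : A \in unitmx by rewrite unitmxE unitfE.
have [eps [eps_pm1 [Q [unitQ [congrA congrB]]]]] :=
  segre4_canonical_form symA symB unitA segreAB.
have eps_neq0 : eps != 0 by case: eps_pm1 => ->; rewrite ?oppr_eq0 oner_eq0.
have Id2 l : l != l0 -> Id A B l = 2%N.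
  move=> l_neq_l0; apply: (canonical_pencil_Id symA symB unitQ congrA congrB).
  rewrite -pencil_poly_horner pencilE hornerZ horner_exp hornerXsubC.
  by rewrite mulf_neq0 ?expf_neq0 ?subr_eq0.
split; last exact: canonical_pencil_qsic unitQ eps_neq0 congrA congrB.
split; first by move=> l l_lt_l0; rewrite Id2 ?lt_eqF.
split; first by move=> l l_gt_l0; rewrite Id2 ?gt_eqF.
by exists eps; split=> //; exists Q.
Qed.
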